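(* Let $\psi$ be a branching mechanism and $g$ the associated gauge function (see context). Let $c\in(0,\infty)$. Then there exists $r(c)\in(0,r_0)$, depending only on $c$, such that for all $r\in(0,r(c))$, $$g(r)\,\psi'^{-1}(c/r^2)\le 4r^2,$$ where $\psi'^{-1}$ is the inverse function of the derivative $\psi'$.
   Context: A branching mechanism is $\psi(\lambda)=\alpha\lambda+\beta\lambda^2+\int_{(0,\infty)}(e^{-\lambda r}-1+\lambda r)\pi(\mathrm{d}r)$, $\lambda\ge0$, with $\alpha,\beta\ge0$ and $\pi$ a Borel measure on $(0,\infty)$ with $\int(r\wedge r^2)\pi(\mathrm{d}r)<\infty$. Let $\varphi=\psi'\circ\psi^{-1}$, whose inverse $\varphi^{-1}$ is defined on $[\alpha,\infty)$. The gauge function is $g(r)=\log\log\frac1r\,/\,\varphi^{-1}\big((\frac1r\log\log\frac1r)^2\big)$ for $r\in(0,r_0)$, with $r_0=\min(\alpha^{-1/2},e^{-e})$ (and $\alpha^{-1/2}=\infty$ if $\alpha=0$). *)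

From HB Require Import structures.
From mathcomp Require Import all_boot all_order all_algebra.
From mathcomp Require Import all_classical all_reals all_analysis.
Set Implicit Arguments. Unset Strict Implicit. Unset Printing Implicit Defensive.
Import Order.TTheory GRing.Theory Num.Theory.
Import numFieldNormedType.Exports.
Local Open Scope classical_set_scope.
Local Open Scope ring_scope.

Section defs.
Context {R : realType}.

Definition posR : set R := `]0, +oo[.

(* Branching mechanism psi(l) = a l + b l^2 + \int_(0,oo) (e^{-l r} - 1 + l r) pi(dr).
   Only meaningful for l >= 0. *)
Definition bm_psi (a b : R) (pi : {measure set R -> \bar R}) (l : R) : R :=
  a * l + b * l ^+ 2 +
  fine (\int[pi]_(r in posR) (expR (- (l * r)) - 1 + l * r)%:E).

Definition levy_cond (pi : {measure set R -> \bar R}) : Prop :=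
  (\int[pi]_(r in posR) (Order.min r (r ^+ 2))%:E < +oo)%E.

(* Inverse on (0,oo) of a (strictly increasing, continuous) function f:
   inv_pos f y = sup {x > 0 | f x <= y}; for such f and y in the range of
   f on (0,oo) this is the unique x > 0 with f x = y. *)
Definition inv_pos (f : R -> R) (y : R) : R := sup [set x : R | 0 < x /\ f x <= y].

Definition bm_dpsi a b pi : R -> R := derive1 (bm_psi a b pi).
Definition bm_dpsi_inv a b pi : R -> R := inv_pos (bm_dpsi a b pi).
Definition bm_phi a b pi : R -> R := bm_dpsi a b pi \o inv_pos (bm_psi a b pi).
Definition bm_phi_inv a b pi : R -> R := inv_pos (bm_phi a b pi).

Definition gauge a b pi (r : R) : R :=
  ln (ln r^-1) / bm_phi_inv a b pi ((r^-1 * ln (ln r^-1)) ^+ 2).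

(* r_0 = min(a^{-1/2}, e^{-e}), with a^{-1/2} = oo when a = 0 *)
Definition gauge_r0 (a : R) : R :=
  if a == 0 then expR (- expR 1) else Order.min (Num.sqrt a)^-1 (expR (- expR 1)).
End defs.

From HB Require Import structures.
From mathcomp Require Import all_boot all_order all_algebra.
From mathcomp Require Import all_classical all_reals all_analysis.
From mathcomp Require Import ring lra measurable_realfun.
Set Implicit Arguments. Unset Strict Implicit.
Import Order.TTheory GRing.Theory Num.Theory.
Import numFieldNormedType.Exports.
Local Open Scope classical_set_scope.
Local Open Scope ring_scope.

(* For l > 0, psi'(l) = D(l) := a + 2 b l + \int r (1 - e^{-l r}) pi(dr): psi is convex with
   supergradient D, and D is locally Lipschitz.  D is nondecreasing with D(2 l) <= 2 D(l), so
   for Y = (L / r)^2, L = log log (1/r), any x with D(x) <= c / r^2 <= Y is pushed by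
   doublings to some w >= x with Y/2 < D(w) <= Y.  Then psi'^{-1}(c / r^2) < 2 w, whereas
   phi^{-1}(Y) >= psi(w) >= w D(w) / 4 > w Y / 8 (from e^{-x} - 1 + x >= x (1 - e^{-x}) / 4),
   so g(r) psi'^{-1}(c / r^2) <= 16 L / Y = 16 r^2 / L, which is at most 4 r^2 once L >= 4. *)

Section exp_bounds.
Variable R : realType.
Implicit Types x y : R.

Lemma mulr_expRN_le1 x : x * expR (- x) <= 1.
Proof.
by rewrite expRN ler_pdivrMr ?expR_gt0 // mul1r; have := expR_ge1Dx x; lra.
Qed.

Lemma normr_1BexpR y : `|1 - expR y| <= `|y| * expR `|y|.
Proof.
have [y0|y0] := leP 0 y.
  rewrite (ger0_norm y0) ler0_norm; last by rewrite subr_le0 -expR0 ler_expR.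
  have h : expR y * (1 - y) <= 1.
    by rewrite mulrC -ler_pdivlMr ?expR_gt0 // div1r -expRN; have := expR_ge1Dx (- y); lra.
  have := expR_ge1Dx y; nra.
rewrite (ltr0_norm y0) ger0_norm; last by rewrite subr_ge0 -expR0 ler_expR ltW.
have : 1 <= expR (- y) by rewrite -expR0 ler_expR; lra.
have := expR_ge1Dx y; nra.
Qed.

Lemma expRN_le1 x : 0 <= x -> expR (- x) <= 1.
Proof. by rewrite expR_le1 oppr_le0. Qed.

End exp_bounds.

Section levy_kernels.
Variable R : realType.
Implicit Types l r s t : R.

Definition levy_min r := Order.min r (r ^+ 2).
Definition psi_kernel l r := expR (- (l * r)) - 1 + l * r.
Definition dpsi_kernel l r := r * (1 - expR (- (l * r))).

Lemma measurable_psi_kernel l : measurable_fun setT (psi_kernel l).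
Proof.
apply: measurable_funD => //; apply: measurable_funB => //.
by apply: measurableT_comp => //; apply: measurable_funN; exact: measurable_funM.
Qed.

Lemma measurable_dpsi_kernel l : measurable_fun setT (dpsi_kernel l).
Proof.
apply: measurable_funM => //; apply: measurable_funB => //.
by apply: measurableT_comp => //; apply: measurable_funN; exact: measurable_funM.
Qed.

Lemma levy_min_ge0 r : 0 <= r -> 0 <= levy_min r.
Proof. by move=> r0; rewrite le_min r0 sqr_ge0. Qed.

Lemma le_levy_min K r x : 0 < r -> x <= K * r -> x <= K * r ^+ 2 -> x <= K * levy_min r.
Proof.
move=> r0 xr xr2; rewrite /levy_min; have [r1|r1] := leP r 1.
  by rewrite min_r // expr2 ger_pMr.
by rewrite min_l // expr2 ler_pMr // ltW.
Qed.

Lemma psi_kernel_ge0 l r : 0 <= psi_kernel l r.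
Proof. by have := expR_ge1Dx (- (l * r)); rewrite /psi_kernel; lra. Qed.

Lemma dpsi_kernel_ge0 l r : 0 <= l -> 0 <= r -> 0 <= dpsi_kernel l r.
Proof.
move=> l0 r0; apply: mulr_ge0 => //.
by rewrite subr_ge0 expRN_le1 // mulr_ge0.
Qed.

Lemma psi_kernel_le l r : 0 <= l * r -> psi_kernel l r <= l * dpsi_kernel l r.
Proof.
rewrite /psi_kernel /dpsi_kernel mulrA; set x := l * r => x0.
have : expR (- x) * (1 + x) <= 1.
  by rewrite expRN ler_pdivrMl ?expR_gt0 // mulr1 expR_ge1Dx.
nra.
Qed.

Lemma psi_kernel_ge l r : 0 <= l * r -> l * dpsi_kernel l r / 4 <= psi_kernel l r.
Proof.
rewrite /psi_kernel /dpsi_kernel mulrA; set x := l * r => x0.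
have e1 := expRN_le1 x0; have e0 := expR_gt0 (- x); have := expR_ge1Dx (- x).
have [x2|x2] := leP x 2; last by nra.
have : (1 - x / 2) ^+ 2 <= expR (- x).
  have -> : expR (- x) = expR (- (x / 2)) ^+ 2 by rewrite expr2 -expRD; congr expR; field.
  have := expR_ge1Dx (- (x / 2)).
  by rewrite ler_pXn2r ?nnegrE ?expR_ge0 //; lra.
nra.
Qed.

Lemma dpsi_kernel_le_levy_min l r : 0 <= l -> 0 < r ->
  dpsi_kernel l r <= (1 + l) * levy_min r.
Proof.
move=> l0 r0; have lr0 : 0 <= l * r by rewrite mulr_ge0 // ltW.
have := expRN_le1 lr0; have := expR_gt0 (- (l * r)); have := expR_ge1Dx (- (l * r)).
rewrite /dpsi_kernel => *; apply: le_levy_min => //; rewrite ?expr2; nra.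
Qed.

Lemma psi_kernel_le_levy_min l r : 0 <= l -> 0 < r ->
  psi_kernel l r <= l * (1 + l) * levy_min r.
Proof.
move=> l0 r0; rewrite -mulrA; apply: le_trans (psi_kernel_le _) _.
  by rewrite mulr_ge0 // ltW.
by rewrite ler_wpM2l // dpsi_kernel_le_levy_min.
Qed.

Lemma le_dpsi_kernel s t r : 0 <= s -> s <= t -> 0 < r -> dpsi_kernel s r <= dpsi_kernel t r.
Proof.
move=> s0 st r0.
by rewrite ler_pM2l // lerD2l lerN2 ler_expR lerN2 ler_pM2r.
Qed.

Lemma dpsi_kernel_double l r : 0 <= l -> 0 <= r -> dpsi_kernel (2 * l) r <= 2 * dpsi_kernel l r.
Proof.
move=> l0 r0; rewrite /dpsi_kernel.
have -> : expR (- (2 * l * r)) = expR (- (l * r)) ^+ 2.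
  by rewrite expr2 -expRD; congr expR; ring.
have := expRN_le1 (mulr_ge0 l0 r0); have := expR_gt0 (- (l * r)).
set E := expR _ => E0 E1.
have : 0 <= r * (1 - E) * (1 - E) by rewrite !mulr_ge0 // subr_ge0.
rewrite expr2; nra.
Qed.

Lemma psi_kernel_supergradient s t r :
  (t - s) * dpsi_kernel s r <= psi_kernel t r - psi_kernel s r.
Proof.
rewrite /psi_kernel /dpsi_kernel.
have -> : expR (- (t * r)) = expR (- (s * r)) * expR (- ((t - s) * r)).
  by rewrite -expRD; congr expR; ring.
have := expR_ge1Dx (- ((t - s) * r)); have := expR_gt0 (- (s * r)).
set E := expR (- (s * r)); set E' := expR (- ((t - s) * r)).
nra.
Qed.

Lemma dpsi_kernel_lipschitz l h r : 0 < l -> `|h| <= l / 2 -> 0 < r ->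
  `|dpsi_kernel (l + h) r - dpsi_kernel l r| <= `|h| * ((1 + 2 / l) * levy_min r).
Proof.
move=> l0 hl r0.
have -> : dpsi_kernel (l + h) r - dpsi_kernel l r =
    r * expR (- (l * r)) * (1 - expR (- (h * r))).
  rewrite /dpsi_kernel.
  have -> : expR (- ((l + h) * r)) = expR (- (l * r)) * expR (- (h * r)).
    by rewrite -expRD; congr expR; ring.
  ring.
have E0 := expR_gt0 (- (l * r)).
rewrite normrM (gtr0_norm (mulr_gt0 r0 E0)).
have := normr_1BexpR (- (h * r)); rewrite normrN normrM (gtr0_norm r0) => hexp.
(* |h| <= l/2 lets half of the decay [expR (- (l * r))] absorb the growth [expR (|h| r)]. *)
have decay : expR (- (l * r)) * expR (`|h| * r) <= expR (- (l * r / 2)).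
  rewrite -expRD ler_expR.
  have : `|h| * r <= l / 2 * r by rewrite ler_pM2r.
  lra.
have q_le : r ^+ 2 * expR (- (l * r / 2)) <= (1 + 2 / l) * levy_min r.
  have y0 : 0 <= l * r / 2 by rewrite divr_ge0 // mulr_ge0 // ltW.
  have := mulr_expRN_le1 (l * r / 2); have := expRN_le1 y0.
  have := expR_gt0 (- (l * r / 2)); set q := expR _ => q0 q1 yq.
  have il : 0 < 2 / l by rewrite divr_gt0.
  have rq : r * q <= 2 / l.
    have -> : r * q = 2 / l * (l * r / 2 * q) by field; rewrite gt_eqF.
    by rewrite ger_pMr.
  apply: le_levy_min => //; rewrite ?expr2; nra.
apply: (le_trans (ler_wpM2l (ltW (mulr_gt0 r0 E0)) hexp)).
rewrite -mulrA; apply: le_trans (ler_wpM2l (normr_ge0 h) q_le).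
have -> : r * (expR (- (l * r)) * (`|h| * r * expR (`|h| * r))) =
    `|h| * (r ^+ 2 * (expR (- (l * r)) * expR (`|h| * r))) by ring.
by rewrite ler_wpM2l // ler_wpM2l ?sqr_ge0.
Qed.

End levy_kernels.

Section levy_integrals.
Variables (R : realType) (pi : {measure set R -> \bar R}).
Hypothesis hpi : levy_cond pi.
Implicit Types (l s t r K : R) (f g : R -> R).

Let mposR : measurable (posR : set R).
Proof. exact: measurable_itv. Qed.

Let posR_gt0 (r : R) : posR r -> 0 < r.
Proof. by rewrite /posR /= in_itv /= andbT. Qed.

Let integrableZl_fin k f : pi.-integrable posR (EFin \o f) ->
  pi.-integrable posR (EFin \o (fun x => k * f x)).
Proof. by move=> /(integrableZl mposR k); apply: eq_integrable. Qed.

Let integrableB_fin f g : pi.-integrable posR (EFin \o f) -> pi.-integrable posR (EFin \o g) ->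
  pi.-integrable posR (EFin \o (fun x => f x - g x)).
Proof. by move=> /(integrableB mposR) /[apply]; apply: eq_integrable. Qed.

Lemma integrable_levy_min : pi.-integrable posR (EFin \o @levy_min R).
Proof.
apply/integrableP; split; first by apply/measurable_EFinP; exact: measurable_minr.
apply: le_lt_trans hpi; rewrite le_eqVlt; apply/orP; left; apply/eqP.
apply: eq_integral => r /[!inE] /posR_gt0 r0 /=.
by rewrite ger0_norm // levy_min_ge0 // ltW.
Qed.

Lemma integrable_levy_dominated f K : measurable_fun setT f ->
  (forall r, 0 < r -> `|f r| <= K * levy_min r) -> pi.-integrable posR (EFin \o f).
Proof.
move=> mf hf; apply: (le_integrable mposR _ _ (integrableZl_fin K integrable_levy_min)).
  by apply/measurable_EFinP; exact: measurable_funS mf.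
move=> r /posR_gt0 r0 /=; rewrite lee_fin (le_trans (hf _ r0)) //; exact: ler_norm.
Qed.

Lemma integrable_psi_kernel l : 0 <= l -> pi.-integrable posR (EFin \o psi_kernel l).
Proof.
move=> l0; apply: (integrable_levy_dominated (K := l * (1 + l)) (measurable_psi_kernel l)) => r r0.
by rewrite ger0_norm ?psi_kernel_ge0 // psi_kernel_le_levy_min.
Qed.

Lemma integrable_dpsi_kernel l : 0 <= l -> pi.-integrable posR (EFin \o dpsi_kernel l).
Proof.
move=> l0; apply: (integrable_levy_dominated (K := 1 + l) (measurable_dpsi_kernel l)) => r r0.
by rewrite ger0_norm ?dpsi_kernel_ge0 ?dpsi_kernel_le_levy_min // ltW.
Qed.

Lemma le_Rintegral_dpsi_kernel s t : 0 <= s -> s <= t ->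
  Rintegral pi posR (dpsi_kernel s) <= Rintegral pi posR (dpsi_kernel t).
Proof.
move=> s0 st; apply: le_Rintegral => //.
- exact: integrable_dpsi_kernel.
- exact: integrable_dpsi_kernel (le_trans s0 st).
- by move=> r /posR_gt0; exact: le_dpsi_kernel.
Qed.

Lemma Rintegral_dpsi_kernel_double l : 0 <= l ->
  Rintegral pi posR (dpsi_kernel (2 * l)) <= 2 * Rintegral pi posR (dpsi_kernel l).
Proof.
move=> l0; rewrite -RintegralZl ?integrable_dpsi_kernel //.
apply: le_Rintegral => //.
- by apply: integrable_dpsi_kernel; rewrite mulr_ge0.
- exact: integrableZl_fin _ (integrable_dpsi_kernel l0).
- by move=> r /posR_gt0 /ltW; exact: dpsi_kernel_double.
Qed.

Lemma Rintegral_psi_kernel_ge l : 0 <= l ->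
  l * Rintegral pi posR (dpsi_kernel l) / 4 <= Rintegral pi posR (psi_kernel l).
Proof.
move=> l0; rewrite mulrAC -RintegralZl ?integrable_dpsi_kernel //.
apply: le_Rintegral => //.
- exact: integrableZl_fin _ (integrable_dpsi_kernel l0).
- exact: integrable_psi_kernel.
- move=> r /posR_gt0 r0; rewrite mulrAC.
  by apply: psi_kernel_ge; rewrite mulr_ge0 // ltW.
Qed.

Lemma Rintegral_psi_kernel_supergradient s t : 0 <= s -> 0 <= t ->
  (t - s) * Rintegral pi posR (dpsi_kernel s) <=
  Rintegral pi posR (psi_kernel t) - Rintegral pi posR (psi_kernel s).
Proof.
move=> s0 t0; rewrite -RintegralZl ?integrable_dpsi_kernel //.
rewrite -RintegralB ?integrable_psi_kernel //.
apply: le_Rintegral => //.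
- exact: integrableZl_fin _ (integrable_dpsi_kernel s0).
- exact: integrableB_fin (integrable_psi_kernel t0) (integrable_psi_kernel s0).
- by move=> r _; exact: psi_kernel_supergradient.
Qed.

Lemma Rintegral_dpsi_kernel_lipschitz l h : 0 < l -> `|h| <= l / 2 ->
  `|Rintegral pi posR (dpsi_kernel (l + h)) - Rintegral pi posR (dpsi_kernel l)| <=
  `|h| * ((1 + 2 / l) * Rintegral pi posR (@levy_min R)).
Proof.
move=> l0 hl; have lh0 : 0 <= l + h by move: hl; rewrite ler_norml; lra.
have iG := integrable_dpsi_kernel lh0; have iG' := integrable_dpsi_kernel (ltW l0).
have iM := integrableZl_fin (1 + 2 / l) integrable_levy_min.
rewrite -RintegralB // -!RintegralZl // ?integrable_levy_min //.
apply: le_trans (le_normr_Rintegral mposR (integrableB_fin iG iG')) _.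
apply: le_Rintegral => //.
- apply: (integrable_levy_dominated (K := `|h| * (1 + 2 / l))).
    apply: measurableT_comp => //.
    exact: measurable_funB (measurable_dpsi_kernel _) (measurable_dpsi_kernel _).
  by move=> r r0; rewrite normr_id -mulrA; exact: (dpsi_kernel_lipschitz l0 hl r0).
- exact: integrableZl_fin _ iM.
- by move=> r /posR_gt0 r0; exact: dpsi_kernel_lipschitz.
Qed.

End levy_integrals.

Section real_functions.
Variable R : realType.
Implicit Types (f D : R -> R) (x y w s t l d C : R).

Lemma inv_pos_eq f w : 0 < w -> (forall t, w < t -> f w < f t) -> inv_pos f (f w) = w.
Proof.
move=> w0 fw; rewrite /inv_pos; set T := [set x | _].
have Tw : T w by [].
have ubw : ubound T w.
  by move=> t [t0 ft]; rewrite leNgt; apply/negP => /fw; rewrite ltNge ft.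
apply/le_anti/andP; split; first by apply: ge_sup => //; exists w.
by apply: sup_upper_bound => //; split; [exists w | exists w].
Qed.

Lemma inv_pos_ge f x y : 0 < x -> f x <= y -> inv_pos f y = 0 \/ x <= inv_pos f y.
Proof.
move=> x0 fx; rewrite /inv_pos; set T := [set x | _].
have [hT|hT] := pselect (has_sup T); last by left; exact: sup_out.
by right; apply: sup_upper_bound.
Qed.

Lemma inv_pos_lt_double f y : inv_pos f y = 0 \/
  exists2 x, 0 < x /\ f x <= y & inv_pos f y < 2 * x.
Proof.
rewrite /inv_pos; set T := [set x | _].
have [hT|hT] := pselect (has_sup T); last by left; exact: sup_out.
right; have [[x1 Tx1] _] := hT.
have s0 : 0 < sup T by apply: lt_le_trans (sup_upper_bound hT Tx1); case: Tx1.
have [x Tx sx] := sup_adherent (divr_gt0 s0 (ltr0Sn R 1)) hT.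
by exists x => //; lra.
Qed.

Lemma doubling_bracket D x y :
  (forall s t, 0 < s -> s <= t -> D s <= D t) ->
  (forall l, 0 < l -> D (2 * l) <= 2 * D l) ->
  (forall M, exists l, 0 < l /\ M < D l) ->
  0 < x -> D x <= y -> exists w, x <= w /\ y / 2 < D w /\ D w <= y.
Proof.
move=> Dmono Ddouble Dunbdd x0 Dx.
have [n yn] : exists n, y < D (2 ^+ n * x).
  have [l [l0 yl]] := Dunbdd y; exists (Num.bound (l / x)).
  apply: lt_le_trans yl (Dmono _ _ l0 _).
  have := archi_boundP (divr_ge0 (ltW l0) (ltW x0)); rewrite ltr_pdivrMr // => lx.
  by apply: le_trans (ltW lx) _; rewrite ler_pM2r // -natrX ler_nat ltnW // ltn_expl.
move: x x0 Dx yn; elim: n => [|n IHn] x x0 Dx yn; first by move: yn; rewrite expr0 mul1r; lra.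
have [D2x|D2x] := leP (D (2 * x)) y.
  rewrite exprSr -mulrA in yn.
  have [w [xw Dw]] := IHn (2 * x) (mulr_gt0 (ltr0Sn R 1) x0) D2x yn.
  by exists w; split => //; lra.
by exists x; split => //; have := Ddouble x x0; lra.
Qed.

Lemma lim_dnbhs0_le f L C d : 0 < d -> 0 <= C ->
  (forall h, h != 0 -> `|h| <= d -> `|f h - L| <= `|h| * C) -> lim (f @ 0^') = L.
Proof.
move=> d0 C0 hf; apply: cvg_lim => //; apply/cvgrPdist_le => e e0.
have C1 : 0 < C + 1 by lra.
near=> h.
have hn : h != 0 by near: h; exact: nbhs_dnbhs_neq.
have : `|h| <= Order.min d (e / (C + 1)).
  by near: h; apply: dnbhs0_le; rewrite lt_min d0 divr_gt0.
rewrite le_min => /andP[hd he]; rewrite distrC; apply: le_trans (hf h hn hd) _.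
have hC : `|h| * C <= `|h| * (C + 1) by rewrite ler_wpM2l //; lra.
by apply: le_trans hC _; rewrite -ler_pdivlMr.
Unshelve. all: by end_near.
Qed.

(* The difference quotients of [f] at [l] are squeezed between [D l] and [D (l + h)]. *)
Lemma derive1_supergradient f D l d C : 0 < d <= l ->
  (forall s t, 0 <= s -> 0 <= t -> (t - s) * D s <= f t - f s) ->
  (forall h, `|h| <= d -> `|D (l + h) - D l| <= `|h| * C) ->
  derive1 f l = D l.
Proof.
move=> /andP[d0 dl] fD DC; rewrite /derive1.
have C0 : 0 <= C.
  have dd : `|d| <= d by rewrite ger0_norm // ltW.
  have := le_trans (normr_ge0 _) (DC d dd).
  by rewrite (ger0_norm (ltW d0)) pmulr_rge0.
apply: (lim_dnbhs0_le d0 C0) => h hn hd; rewrite (addrC h l).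
have lh0 : 0 <= l + h by move: hd; rewrite ler_norml; lra.
have l0 : 0 <= l by lra.
have lo : h * D l <= f (l + h) - f l.
  by have := fD _ _ l0 lh0; rewrite addrAC subrr add0r.
have up : f (l + h) - f l <= h * D (l + h).
  by have := fD _ _ lh0 l0; rewrite opprD addrA subrr add0r mulNr; lra.
have sandwich : `|f (l + h) - f l - h * D l| <= `|h| * `|D (l + h) - D l|.
  by rewrite -normrM !ger0_norm ?mulrBr; lra.
have -> : h^-1 *: (f (l + h) - f l) - D l = h^-1 * (f (l + h) - f l - h * D l).
  by rewrite /GRing.scale /=; field.
rewrite normrM normfV ler_pdivrMl ?normr_gt0 //.
by apply: le_trans sandwich _; rewrite ler_wpM2l ?DC.
Qed.

End real_functions.

Section branching_mechanism.
Variables (R : realType) (a b : R) (pi : {measure set R -> \bar R}).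
Hypotheses (ha : 0 <= a) (hb : 0 <= b) (hpi : levy_cond pi).
Implicit Types (l s t w h : R).

Local Notation psi := (bm_psi a b pi).

Definition bm_dpsi_int l := a + 2 * b * l + Rintegral pi posR (dpsi_kernel l).

Lemma bm_psiE l : psi l = a * l + b * l ^+ 2 + Rintegral pi posR (psi_kernel l).
Proof. by []. Qed.

Lemma bm_psi_supergradient s t : 0 <= s -> 0 <= t ->
  (t - s) * bm_dpsi_int s <= psi t - psi s.
Proof.
move=> s0 t0; rewrite !bm_psiE /bm_dpsi_int.
have := Rintegral_psi_kernel_supergradient hpi s0 t0.
have : 0 <= b * (t - s) ^+ 2 by rewrite mulr_ge0 ?sqr_ge0.
rewrite !expr2; nra.
Qed.

Lemma bm_psi_ge w : 0 <= w -> w * bm_dpsi_int w / 4 <= psi w.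
Proof.
move=> w0; rewrite bm_psiE /bm_dpsi_int.
have := Rintegral_psi_kernel_ge hpi w0.
have : 0 <= a * w by rewrite mulr_ge0.
have : 0 <= b * w ^+ 2 by rewrite mulr_ge0 ?sqr_ge0.
rewrite !expr2; nra.
Qed.

Lemma le_bm_dpsi_int s t : 0 <= s -> s <= t -> bm_dpsi_int s <= bm_dpsi_int t.
Proof.
move=> s0 st; rewrite /bm_dpsi_int; apply: lerD.
  by rewrite lerD2l ler_wpM2l // mulr_ge0.
exact: le_Rintegral_dpsi_kernel.
Qed.

Lemma bm_dpsi_int_double l : 0 <= l -> bm_dpsi_int (2 * l) <= 2 * bm_dpsi_int l.
Proof.
move=> l0; rewrite /bm_dpsi_int [2 * (_ + _)]mulrDr.
by apply: lerD; [have : (0 : R) <= a by []; lra | exact: Rintegral_dpsi_kernel_double].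
Qed.

Lemma bm_dpsi_int_lipschitz l h : 0 < l -> `|h| <= l / 2 ->
  `|bm_dpsi_int (l + h) - bm_dpsi_int l| <=
  `|h| * (2 * b + (1 + 2 / l) * Rintegral pi posR (@levy_min R)).
Proof.
move=> l0 hl; rewrite /bm_dpsi_int.
have := Rintegral_dpsi_kernel_lipschitz hpi l0 hl.
set I' := Rintegral _ _ (dpsi_kernel (l + h)); set I := Rintegral _ _ (dpsi_kernel l).
move=> hI.
have -> : a + 2 * b * (l + h) + I' - (a + 2 * b * l + I) = 2 * b * h + (I' - I) by ring.
apply: le_trans (ler_normD _ _) _.
rewrite normrM (ger0_norm (mulr_ge0 _ hb)) // mulrDr.
by apply: lerD; first by rewrite mulrC.
Qed.

Lemma bm_dpsiE l : 0 < l -> bm_dpsi a b pi l = bm_dpsi_int l.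
Proof.
move=> l0; apply: (derive1_supergradient (d := l / 2)); first by apply/andP; lra.
- exact: bm_psi_supergradient.
- by move=> h; exact: bm_dpsi_int_lipschitz.
Qed.

Lemma bm_phi_psi w : 0 < w -> 0 < bm_dpsi_int w -> bm_phi a b pi (psi w) = bm_dpsi_int w.
Proof.
move=> w0 Dw0; rewrite /bm_phi /= inv_pos_eq ?bm_dpsiE // => t wt.
have := bm_psi_supergradient (ltW w0) (ltW (lt_trans w0 wt)).
have : 0 < (t - w) * bm_dpsi_int w by rewrite mulr_gt0 // subr_gt0.
lra.
Qed.

End branching_mechanism.

Lemma gauge_mul_dpsi_inv_le (R : realType) (a b : R) (pi : {measure set R -> \bar R})
  (ha : 0 <= a) (hb : 0 <= b) (hpi : levy_cond pi)
  (hdpsi_unbdd : forall M : R, exists l : R, 0 < l /\ M < bm_dpsi a b pi l)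
  (c r : R) : 0 < r -> 4 <= ln (ln r^-1) -> c <= ln (ln r^-1) ^+ 2 ->
  gauge a b pi r * bm_dpsi_inv a b pi (c / r ^+ 2) <= 4 * r ^+ 2.
Proof.
rewrite /gauge /bm_dpsi_inv; set L := ln (ln r^-1) => r0 L4 cL.
set Y := (r^-1 * L) ^+ 2; set D := bm_dpsi_int a b pi; set psi := bm_psi a b pi.
have r2 : 0 < r ^+ 2 by rewrite exprn_gt0.
have L0 : 0 < L by apply: lt_le_trans L4.
have Y0 : 0 < Y by rewrite exprn_gt0 // mulr_gt0 ?invr_gt0.
have rY : r ^+ 2 * Y = L ^+ 2 by rewrite /Y exprMn exprVn mulrA mulfV ?mul1r // gt_eqF.
have cY : c / r ^+ 2 <= Y by rewrite ler_pdivrMr // mulrC rY.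
(* [inv_pos] is [0] when its defining set has no supremum, and the bound is then trivial. *)
have [->|[x [x0 Dx] sx]] := inv_pos_lt_double (bm_dpsi a b pi) (c / r ^+ 2).
  by rewrite mulr0 mulr_ge0 // ltW.
set s := inv_pos _ _ in sx *.
rewrite bm_dpsiE // -/D in Dx.
have [w [xw [Dw_gt Dw_le]]] : exists w, x <= w /\ Y / 2 < D w /\ D w <= Y.
  apply: doubling_bracket x0 (le_trans Dx cY).
  - by move=> u v /ltW u0; exact: le_bm_dpsi_int.
  - by move=> l /ltW; exact: bm_dpsi_int_double.
  - by move=> M; have [l [l0 Ml]] := hdpsi_unbdd M; exists l; rewrite /D -bm_dpsiE.
have w0 : 0 < w := lt_le_trans x0 xw.
have Dw0 : 0 < D w := lt_trans (divr_gt0 Y0 (ltr0Sn R 1)) Dw_gt.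
have psi_ge : w * D w / 4 <= psi w := bm_psi_ge ha hb hpi (ltW w0).
have psi0 : 0 < psi w by apply: lt_le_trans psi_ge; rewrite !divr_gt0 ?mulr_gt0.
have phi_le : bm_phi a b pi (psi w) <= Y by rewrite bm_phi_psi.
have [p0|psi_le] := inv_pos_ge psi0 phi_le.
  by rewrite /bm_phi_inv p0 invr0 mulr0 mul0r mulr_ge0 // ltW.
set p := bm_phi_inv a b pi Y; have {}psi_le : psi w <= p := psi_le.
have p0 : 0 < p := lt_le_trans psi0 psi_le.
rewrite mulrAC ler_pdivrMr //.
have Ls : L * s <= L * (2 * w).
  by rewrite ler_pM2l // ltW // (lt_le_trans sx) // ler_pM2l.
have wD : w * D w <= 4 * p.
  by rewrite [4 * p]mulrC -ler_pdivrMr //; exact: le_trans psi_ge psi_le.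
have wL : w * L ^+ 2 / 2 <= r ^+ 2 * (w * D w).
  have -> : w * L ^+ 2 / 2 = r ^+ 2 * (w * (Y / 2)) by rewrite -rY; field.
  by rewrite ler_pM2l // ler_pM2l // ltW.
have Lw : L * (2 * w) <= w * L ^+ 2 / 2.
  rewrite -subr_ge0 (_ : _ - _ = w * L * (L - 4) / 2); last by rewrite expr2; field.
  by rewrite divr_ge0 // mulr_ge0 ?subr_ge0 // mulr_ge0 // ltW.
apply: le_trans Ls (le_trans Lw (le_trans wL _)).
by rewrite (mulrC 4) -(mulrA (r ^+ 2)) ler_pM2l.
Qed.

Lemma gauge_r0_gt0 (R : realType) (a : R) : 0 <= a -> 0 < gauge_r0 a.
Proof.
move=> ha; rewrite /gauge_r0; case: ifPn => [_|a0]; first exact: expR_gt0.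
by rewrite lt_min expR_gt0 andbT invr_gt0 sqrtr_gt0 lt_neqAle eq_sym a0.
Qed.

Lemma ln_ln_inv_gt (R : realType) (K r : R) : 0 < r -> r < expR (- expR K) ->
  K < ln (ln r^-1).
Proof.
move=> r0 hr; have : expR K < ln r^-1.
  by rewrite lnV ?posrE // ltrNr -[X in _ < X]expRK ltr_ln ?posrE ?expR_gt0.
by move=> Kr; rewrite -[X in X < _]expRK ltr_ln ?posrE ?expR_gt0 // (lt_trans _ Kr) ?expR_gt0.
Qed.

Theorem lemma2p3 (R : realType) (a b : R) (pi : {measure set R -> \bar R})
  (ha : 0 <= a) (hb : 0 <= b) (hpi : levy_cond pi)
  (hdpsi_unbdd : forall M : R, exists l : R, 0 < l /\ M < bm_dpsi a b pi l)
  (c : R) (hc : 0 < c) :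
  exists rc : R, 0 < rc /\ rc < gauge_r0 a /\
    forall r : R, 0 < r -> r < rc ->
      gauge a b pi r * bm_dpsi_inv a b pi (c / r ^+ 2) <= 4 * r ^+ 2.
Proof.
have r0_gt0 := gauge_r0_gt0 ha.
exists (Order.min (gauge_r0 a / 2) (expR (- expR (4 + c)))); split.
  by rewrite lt_min expR_gt0 divr_gt0.
split; first by rewrite gt_min ltr_pdivrMr // ltr_pMr // ltr1n.
move=> r r0; rewrite lt_min => /andP[_ /(ln_ln_inv_gt r0) cL].
apply: gauge_mul_dpsi_inv_le => //; first lra.
have LL : ln (ln r^-1) <= ln (ln r^-1) ^+ 2 by rewrite expr2 ler_pMr; lra.
lra.
Qed.
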